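(* Let $t_1, t_2 \in \mathcal{L}_r$ with $t_1 =_{\mathcal{L}} t_2$. Then for all finite $E \subseteq \mathcal{X}$ and $S \in \mathbb{N}$: $B(E, S)$ is one of the sublevels of $t_1$ if and only if $B(E, S)$ is one of the sublevels of $t_2$.
   Context: $\mathcal{X}$ is a countable set of variables; a valuation is $\sigma\colon\mathcal{X}\to\mathbb{N}$. For finite $E\subseteq\mathcal{X}$, $x\in\mathcal{X}$, $S\in\mathbb{N}$, the sublevels $A(E,x,S)$ and $B(E,S)$ have values $[A(E,x,S)]_\sigma = 0$ if some $y\in E$ has $\sigma(y)=0$, and $\sigma(x)+S$ otherwise; $[B(E,S)]_\sigma=0$ if some $y\in E$ has $\sigma(y)=0$, and $S$ otherwise. $\mathcal{L}_s$ is the set of sublevels $A(E,x,S)$ with $x\in E$ and $B(E,S)$ with $S>0$. $t_1\leqslant_{\mathcal{L}} t_2$ (resp. $t_1 =_{\mathcal{L}} t_2$) means $[t_1]_\sigma\le[t_2]_\sigma$ (resp. $=$) for every valuation $\sigma$; $\max$ of a finite family is evaluated pointwise (empty max has value $0$). Two sublevels $u,v$ are incomparable if neither $u\leqslant_{\mathcal{L}} v$ nor $v\leqslant_{\mathcal{L}} u$. A minimal representation is a formal expression $\max(u_1,\ldots,u_n)$ where $\{u_1,\ldots,u_n\}$ is a finite set of elements of $\mathcal{L}_s$ that are pairwise incomparable; $\mathcal{L}_r$ is the set of minimal representations, and the $u_i$ are called its sublevels. *)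

From Stdlib Require Import List.
From HB Require Import structures.
From mathcomp Require Import all_boot.
From mathcomp Require Import finmap.
Set Implicit Arguments. Unset Strict Implicit. Unset Printing Implicit Defensive.

Section Sublevels.
Variable X : countType.

Inductive sublevel : Type :=
| SA : {fset X} -> X -> nat -> sublevel
| SB : {fset X} -> nat -> sublevel.

Definition sl_val (sigma : X -> nat) (u : sublevel) : nat :=
  match u with
  | SA E x s => if has (fun y => sigma y == 0) (enum_fset E) then 0 else sigma x + s
  | SB E s => if has (fun y => sigma y == 0) (enum_fset E) then 0 else s
  end.

Definition in_Ls (u : sublevel) : Prop :=
  match u with
  | SA E x _ => x \in E
  | SB _ s => 0 < s
  end.

Definition sl_le (u v : sublevel) : Prop :=
  forall sigma : X -> nat, sl_val sigma u <= sl_val sigma v.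

Definition incomparable (u v : sublevel) : Prop := ~ sl_le u v /\ ~ sl_le v u.

(* A minimal representation max(u_1,...,u_n): a finite list of sublevels of L_s,
   pairwise incomparable (hence in particular without repetitions). *)
Definition is_minrep (t : list sublevel) : Prop :=
  (forall u, In u t -> in_Ls u) /\
  (forall u v l1 l2 l3, t = l1 ++ u :: l2 ++ v :: l3 -> incomparable u v).

(* pointwise value of the max; empty max is 0 *)
Definition rep_val (sigma : X -> nat) (t : list sublevel) : nat :=
  \max_(u <- t) sl_val sigma u.

Definition L_eq (t1 t2 : list sublevel) : Prop :=
  forall sigma : X -> nat, rep_val sigma t1 = rep_val sigma t2.

End Sublevels.

(** Let B(E,S) occur in the minimal representation t1. Evaluating at the
    indicator valuation of E, every other sublevel of t1 is strictly below S
    (incomparability with B(E,S) forces this), so both t1 and t2 take the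
    value S there, and some sublevel u of t2 reaches S with its variable set
    inside E. If u = A(E',x,S-1), raising the valuation at x to 2 lifts t2
    above S while t1 stays at most S. If u = B(E',S) with E' a proper subset
    of E, the indicator valuation of E' kills B(E,S), so t1 stays below S
    while t2 still reaches S. Hence u = B(E,S). *)

From Stdlib Require Import List.
From mathcomp Require Import all_boot finmap.
Set Implicit Arguments. Unset Strict Implicit. Unset Printing Implicit Defensive.

Section Sublevels.
Variable X : countType.
Implicit Types (t : list (sublevel X)) (u v : sublevel X) (sigma : X -> nat).
Implicit Types (E : {fset X}) (x : X) (S : nat).

Definition sl_dom u : {fset X} := match u with SA E _ _ | SB E _ => E end.

Definition indicator E : X -> nat := fun y => y \in E.

Lemma all_gt0P sigma E :
  reflect {in E, forall y, 0 < sigma y} (~~ has (fun y => sigma y == 0) (enum_fset E)).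
Proof. by apply: (iffP hasPn) => Epos y /Epos; rewrite lt0n. Qed.

Lemma sl_val_dom_gt0 sigma u :
  0 < sl_val sigma u -> {in sl_dom u, forall y, 0 < sigma y}.
Proof. by case: u => [E x S|E S] /=; case: ifPn => // /all_gt0P. Qed.

Lemma sl_val_SB sigma E S :
  {in E, forall y, 0 < sigma y} -> sl_val sigma (SB E S) = S.
Proof. by move=> /all_gt0P /negbTE /= ->. Qed.

Lemma sl_val_SA sigma E x S :
  {in E, forall y, 0 < sigma y} -> sl_val sigma (SA E x S) = sigma x + S.
Proof. by move=> /all_gt0P /negbTE /= ->. Qed.

Lemma sl_val_SB_le sigma E S : sl_val sigma (SB E S) <= S.
Proof. by rewrite /=; case: has. Qed.

Lemma SB_le_SB E E' S S' :
  {subset E' <= E} -> S <= S' -> sl_le (SB E S) (SB E' S').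
Proof.
move=> sub_E'E le_SS' sigma; rewrite {1}/sl_val; case: ifPn => // /all_gt0P Epos.
by rewrite sl_val_SB // => y /sub_E'E /Epos.
Qed.

Lemma SB_le_SA E E' x S S' :
  {subset E' <= E} -> x \in E -> S <= S'.+1 -> sl_le (SB E S) (SA E' x S').
Proof.
move=> sub_E'E xE le_SS' sigma; rewrite {1}/sl_val; case: ifPn => // /all_gt0P Epos.
rewrite sl_val_SA => [|y /sub_E'E /Epos //].
by rewrite (leq_trans le_SS') // -add1n leq_add2r Epos.
Qed.

Lemma sl_val_lt_of_not_SB_le sigma E S u b :
  0 < S -> in_Ls u -> ~ sl_le (SB E S) u ->
  (forall y, 0 < sigma y -> y \in E) -> (forall y, sigma y <= b.+1) ->
  sl_val sigma u < S + b.
Proof.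
move=> S_gt0 u_Ls not_le supp bnd.
have [->|val_gt0] := posnP (sl_val sigma u); first by rewrite ltn_addr.
have dom_gt0 := sl_val_dom_gt0 val_gt0.
have sub_dom : {subset sl_dom u <= E} by move=> y /dom_gt0 /supp.
case: u u_Ls not_le dom_gt0 sub_dom {val_gt0}
  => [E' x S'|E' S'] u_Ls not_le dom_gt0 sub_dom.
- have lt_S'S : S'.+1 < S.
    by rewrite ltnNge; apply/negP => le_SS'; apply/not_le/SB_le_SA => //; exact: sub_dom.
  rewrite sl_val_SA // (leq_ltn_trans (leq_add (bnd x) (leqnn S'))) //.
  by rewrite addSnnS addnC ltn_add2r.
- have lt_S'S : S' < S by rewrite ltnNge; apply/negP => le_SS'; exact/not_le/SB_le_SB.
  by rewrite sl_val_SB // ltn_addr.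
Qed.

Lemma minrep_eq_or_incomparable t u v :
  is_minrep t -> In u t -> In v t -> u = v \/ incomparable u v.
Proof.
move=> [_ t_inc] u_t v_t; have [l1 [l2 t_eq]] := in_split _ _ u_t.
rewrite t_eq in v_t; have [v_l1|[<-|v_l2]] := in_app_or _ _ _ v_t; [right|by left|right].
- have [m1 [m2 l1_eq]] := in_split _ _ v_l1.
  have [] := t_inc v u m1 m2 l2; first by rewrite t_eq l1_eq -app_assoc.
  by split.
- have [m1 [m2 l2_eq]] := in_split _ _ v_l2.
  by apply: (t_inc u v l1 m1 m2); rewrite t_eq l2_eq.
Qed.

Lemma leq_rep_val sigma t u : In u t -> sl_val sigma u <= rep_val sigma t.
Proof.
rewrite /rep_val; elim: t => [//|v t IHt] /= [->|u_t]; rewrite big_cons.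
  exact: leq_maxl.
exact: leq_trans (IHt u_t) (leq_maxr _ _).
Qed.

Lemma rep_val_lt sigma t m :
  0 < m -> (forall u, In u t -> sl_val sigma u < m) -> rep_val sigma t < m.
Proof.
rewrite /rep_val => m_gt0; elim: t => [|v t IHt] t_lt; first by rewrite big_nil.
rewrite big_cons gtn_max t_lt /=; last by left.
by apply: IHt => u u_t; apply: t_lt; right.
Qed.

Lemma rep_val_witness sigma t m :
  0 < m -> m <= rep_val sigma t -> exists2 u, In u t & m <= sl_val sigma u.
Proof.
rewrite /rep_val => m_gt0; elim: t => [|v t IHt]; first by rewrite big_nil leqNgt m_gt0.
rewrite big_cons leq_max => /orP [m_le_v|/IHt [u u_t m_le_u]].
  by exists v => //; left.
by exists u => //; right.
Qed.

Lemma minrep_rep_val_lt t E S sigma b :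
  is_minrep t -> In (SB E S) t ->
  (forall y, 0 < sigma y -> y \in E) -> (forall y, sigma y <= b.+1) ->
  sl_val sigma (SB E S) < S + b -> rep_val sigma t < S + b.
Proof.
move=> t_min B_t supp bnd B_lt.
apply: rep_val_lt => [|u u_t]; first exact: leq_ltn_trans B_lt.
have [<- //|[not_le _]] := minrep_eq_or_incomparable t_min B_t u_t.
apply: (sl_val_lt_of_not_SB_le (E := E)) => //.
  exact: (t_min.1 _ B_t).
exact: (t_min.1 _ u_t).
Qed.

Lemma indicator_gt0 E : {in E, forall y, 0 < indicator E y}.
Proof. by move=> y; rewrite lt0b. Qed.

Lemma indicator_gt0_mem E y : 0 < indicator E y -> y \in E.
Proof. by rewrite lt0b. Qed.

Lemma minrep_rep_val_indicator t E S :
  is_minrep t -> In (SB E S) t -> rep_val (indicator E) t = S.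
Proof.
move=> t_min B_t; apply/eqP; rewrite eqn_leq; apply/andP; split.
  rewrite -ltnS -[S.+1]addn1; apply: (minrep_rep_val_lt t_min B_t).
  - exact: indicator_gt0_mem.
  - by move=> y; rewrite leqW ?leq_b1.
  - by rewrite addn1 ltnS sl_val_SB_le.
by rewrite -{1}(sl_val_SB S (@indicator_gt0 E)) leq_rep_val.
Qed.

Lemma minrep_SA_lt t1 t2 E S E' x S' :
  is_minrep t1 -> L_eq t1 t2 -> In (SB E S) t1 -> In (SA E' x S') t2 ->
  {subset E' <= E} -> x \in E -> S'.+1 < S.
Proof.
move=> t1_min t12 B_t1 A_t2 E'_sub xE.
pose sigma y := indicator E y + (y == x).
have : rep_val sigma t1 < S + 1.
  apply: (minrep_rep_val_lt t1_min B_t1).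
  - by move=> y; rewrite /sigma /indicator; case: eqP => [->|_]; rewrite ?addn0 ?lt0b.
  - by move=> y; exact: leq_add (leq_b1 _) (leq_b1 _).
  - by rewrite addn1 ltnS sl_val_SB_le.
rewrite t12 addn1 ltnS => t2_le; apply: (leq_trans _ t2_le).
apply: leq_trans (leq_rep_val _ A_t2).
rewrite sl_val_SA; last by move=> y /E'_sub /indicator_gt0; apply: ltn_addr.
by rewrite /sigma /indicator xE eqxx.
Qed.

Lemma minrep_SB_dom_eq t1 t2 E E' S :
  is_minrep t1 -> L_eq t1 t2 -> In (SB E S) t1 -> In (SB E' S) t2 ->
  {subset E' <= E} -> E' = E.
Proof.
move=> t1_min t12 B_t1 B'_t2 E'_sub; apply/eqP.
rewrite eqEfsubset; apply/andP; split; apply/fsubsetP => // z zE.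
apply: contraT => zE'.
have : rep_val (indicator E') t1 < S + 0.
  apply: (minrep_rep_val_lt t1_min B_t1).
  - by move=> y /indicator_gt0_mem /E'_sub.
  - by move=> y; rewrite leq_b1.
  - rewrite /= ifT ?addn0 ?(t1_min.1 _ B_t1) //; apply/hasP; exists z => //.
    by rewrite /indicator (negbTE zE').
rewrite t12 addn0 ltnNge => /negP[].
by rewrite -{1}(sl_val_SB S (@indicator_gt0 E')) leq_rep_val.
Qed.

Lemma minrep_SB_mem t1 t2 E S :
  is_minrep t1 -> is_minrep t2 -> L_eq t1 t2 -> In (SB E S) t1 -> In (SB E S) t2.
Proof.
move=> t1_min t2_min t12 B_t1.
have S_gt0 : 0 < S := t1_min.1 _ B_t1.
have t2_E : rep_val (indicator E) t2 = S.
  by rewrite -t12 (minrep_rep_val_indicator t1_min B_t1).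
have [u u_t2 S_le_u] := rep_val_witness S_gt0 (eq_leq (esym t2_E)).
have u_gt0 := sl_val_dom_gt0 (leq_trans S_gt0 S_le_u).
have u_sub : {subset sl_dom u <= E} by move=> y /u_gt0 /indicator_gt0_mem.
case: u u_t2 S_le_u u_gt0 u_sub => [E' x S'|E' S'] u_t2 S_le_u u_gt0 E'_sub.
- have xE : x \in E := E'_sub x (t2_min.1 _ u_t2).
  rewrite sl_val_SA // /indicator xE add1n in S_le_u.
  by have := minrep_SA_lt t1_min t12 B_t1 u_t2 E'_sub xE; rewrite ltnNge S_le_u.
- have S'_le_S : S' <= S by rewrite -t2_E -{1}(sl_val_SB S' u_gt0) leq_rep_val.
  rewrite sl_val_SB // in S_le_u.
  have S'_eq : S' = S by apply/eqP; rewrite eqn_leq S'_le_S.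
  subst S'.
  by rewrite -(minrep_SB_dom_eq t1_min t12 B_t1 u_t2 E'_sub).
Qed.

End Sublevels.

Theorem proposition32 (X : countType) (t1 t2 : list (sublevel X)) :
  is_minrep t1 -> is_minrep t2 -> L_eq t1 t2 ->
  forall (E : {fset X}) (S : nat), In (SB E S) t1 <-> In (SB E S) t2.
Proof.
move=> t1_min t2_min t12 E S; split; first exact: minrep_SB_mem.
by apply: minrep_SB_mem => // sigma; rewrite t12.
Qed.
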